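(* In the game described in the context, suppose the SSP Game Model Assumption holds, and let $\mu\in\Pi_1^{SD}$, $\nu\in\Pi_2^{SD}$. Then: (i) if there exists $x\in\mathbb{R}^n$ with $x\ge T_\mu x$, then $\mu$ is essentially proper; (ii) if there exists $x\in\mathbb{R}^n$ with $x\le\tilde T_\nu x$, then $\nu$ is essentially proper. Moreover, the policies $\bar\mu$ and $\bar\nu$ from parts (i) and (ii) of the SSP Game Model Assumption are essentially proper (so each player has at least one essentially proper stationary deterministic policy).
   Context: Game model. $S=\{1,\dots,n\}$, $S_o=S\cup\{0\}$, $0$ an absorbing cost-free termination state. At $i\in S$ player I picks $\bar u\in\bar U(i)$, player II picks $\bar v\in\bar V(i)$ ($\bar U(i),\bar V(i)$ compact subsets of complete separable metric spaces); expected cost $c_i(\bar u,\bar v)\in\mathbb{R}$ to player I, transition to $j\in S_o$ w.p. $p_{ij}(\bar u,\bar v)$. Standing assumption: $p_{ij}$ continuous on $\bar U(i)\times\bar V(i)$, and $c_i$ lower semicontinuous in $\bar u$ for fixed $\bar v$, upper semicontinuous in $\bar v$ for fixed $\bar u$. $x_i(\pi_1,\pi_2)=\liminf_{t\to\infty}E_{\pi_1\pi_2}[\sum_{k=0}^tc_{i_k}(\bar u_k,\bar v_k)\mid i_0=i]$. $\Pi_1^{SD}=\{\mu:\mu(i)\in\bar U(i)\}$, $\Pi_2^{SD}=\{\nu:\nu(i)\in\bar V(i)\}$; $T_{\mu\nu}x=c(\mu,\nu)+P(\mu,\nu)x$ with $c(\mu,\nu)_i=c_i(\mu(i),\nu(i))$,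 $P(\mu,\nu)_{ij}=p_{ij}(\mu(i),\nu(i))$, $i,j\in S$; $T_\mu x=\sup_{\nu\in\Pi_2^{SD}}T_{\mu\nu}x$, $\tilde T_\nu x=\inf_{\mu\in\Pi_1^{SD}}T_{\mu\nu}x$ (componentwise). Prolonging pair: for some initial state the termination state is with positive probability never reached; otherwise non-prolonging. SSP Game Model Assumption: (i) there is $\bar\mu\in\Pi_1^{SD}$ with $x_i(\bar\mu,\nu)<+\infty$ for all $\nu\in\Pi_2^{SD}$ and all $i$; (ii) there is $\bar\nu\in\Pi_2^{SD}$ with $x_i(\mu,\bar\nu)>-\infty$ for all $\mu\in\Pi_1^{SD}$ and all $i$; (iii) every prolonging pair $(\mu,\nu)\in\Pi_1^{SD}\times\Pi_2^{SD}$ has $x_i(\mu,\nu)\in\{+\infty,-\infty\}$ for some $i$. Essentially proper: $\mu$ is essentially proper if some $\nu$ makes $(\mu,\nu)$ non-prolonging and every $\nu$ with $(\mu,\nu)$ prolonging has $x_i(\mu,\nu)=-\infty$ for some $i$; $\nu$ is essentially proper if some $\mu$ makes $(\mu,\nu)$ non-prolonging and every $\mu$ with $(\mu,\nu)$ prolonging has $x_i(\mu,\nu)=+\infty$ for some $i$. *)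

From HB Require Import structures.
From mathcomp Require Import all_boot all_order all_algebra.
From mathcomp Require Import all_classical all_reals all_analysis.
Set Implicit Arguments. Unset Strict Implicit. Unset Printing Implicit Defensive.
Import Order.TTheory GRing.Theory Num.Theory.
Import numFieldNormedType.Exports.
Local Open Scope classical_set_scope.
Local Open Scope ring_scope.

(* The state space S = {1,...,n} is represented by 'I_n ; the termination
   state 0 is represented by [None : option 'I_n]. *)

Definition separable_space (T : topologicalType) :=
  exists D : set T, countable D /\ dense D.

Definition lsc_on (T : topologicalType) (R : realType) (A : set T) (f : T -> R) :=
  forall x, A x -> forall a : R, a < f x ->
    \forall y \near x, A y -> a < f y.

Definition usc_on (T : topologicalType) (R : realType) (A : set T) (f : T -> R) :=
  forall x, A x -> forall a : R, f x < a ->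
    \forall y \near x, A y -> f y < a.

Record game (R : realType) (U V : Type) (n : nat) := Game {
  Ubar : 'I_n -> set U;
  Vbar : 'I_n -> set V;
  cost : 'I_n -> U -> V -> R;
  prob : 'I_n -> option 'I_n -> U -> V -> R }.

Section Game.
Variables (R : realType) (U V : Type) (n : nat) (G : game R U V n).
Local Notation Ubar := (Ubar G).
Local Notation Vbar := (Vbar G).
Local Notation c := (cost G).
Local Notation p := (prob G).

Definition Pi1SD (mu : 'I_n -> U) := forall i, Ubar i (mu i).
Definition Pi2SD (nu : 'I_n -> V) := forall i, Vbar i (nu i).

Definition cvec (mu : 'I_n -> U) (nu : 'I_n -> V) : 'cV[R]_n :=
  \col_i c i (mu i) (nu i).

Definition Pmx (mu : 'I_n -> U) (nu : 'I_n -> V) : 'M[R]_n :=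
  \matrix_(i, j) p i (Some j) (mu i) (nu i).

Definition Tmunu mu nu (x : 'cV[R]_n) : 'cV[R]_n :=
  cvec mu nu + Pmx mu nu *m x.

Definition Tmu mu (x : 'cV[R]_n) (i : 'I_n) : \bar R :=
  ereal_sup [set ((Tmunu mu nu x) i 0)%:E | nu in Pi2SD].

Definition Ttnu nu (x : 'cV[R]_n) (i : 'I_n) : \bar R :=
  ereal_inf [set ((Tmunu mu nu x) i 0)%:E | mu in Pi1SD].

(* x_i(mu,nu) = liminf_t E[sum_{k=0}^t c_{i_k} | i_0 = i]
             = liminf_t (sum_{k=0}^t P^k c)_i   for stationary (mu,nu) *)
Definition xcost mu nu (i : 'I_n) : \bar R :=
  limn_einf (fun t : nat =>
    (\sum_(k < t.+1) (Pmx mu nu ^+ k *m cvec mu nu) i 0)%:E).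

(* probability, starting at i, that termination has not occurred by step k *)
Definition not_term_prob mu nu (k : nat) (i : 'I_n) : R :=
  (Pmx mu nu ^+ k *m (const_mx 1 : 'cV[R]_n)) i 0.

Definition never_term_prob mu nu (i : 'I_n) : R :=
  lim (not_term_prob mu nu k i @[k --> \oo]).

Definition prolonging mu nu := exists i, 0 < never_term_prob mu nu i.

Definition ess_proper1 mu :=
  (exists nu, Pi2SD nu /\ ~ prolonging mu nu) /\
  (forall nu, Pi2SD nu -> prolonging mu nu -> exists i, xcost mu nu i = -oo%E).

Definition ess_proper2 nu :=
  (exists mu, Pi1SD mu /\ ~ prolonging mu nu) /\
  (forall mu, Pi1SD mu -> prolonging mu nu -> exists i, xcost mu nu i = +oo%E).

Definition SSP_assumption :=
  [/\ (exists mubar, Pi1SD mubar /\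
         forall nu, Pi2SD nu -> forall i, (xcost mubar nu i < +oo)%E),
      (exists nubar, Pi2SD nubar /\
         forall mu, Pi1SD mu -> forall i, (-oo < xcost mu nubar i)%E) &
      (forall mu nu, Pi1SD mu -> Pi2SD nu -> prolonging mu nu ->
         exists i, xcost mu nu i = +oo%E \/ xcost mu nu i = -oo%E)].

End Game.

From HB Require Import structures.
From mathcomp Require Import all_boot all_order all_algebra.
From mathcomp Require Import all_classical all_reals all_analysis.
Import Order.TTheory GRing.Theory Num.Theory.
Import numFieldNormedType.Exports.
Set Implicit Arguments. Unset Strict Implicit. Unset Printing Implicit Defensive.
Local Open Scope classical_set_scope.
Local Open Scope ring_scope.

(* If x >= T_mu x then x >= T_{mu nu} x = c + P x for every nu, and iterating
   gives x >= sum_{k<t} P^k c + P^t x.  As P is substochastic, P^t x stays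
   bounded by the sup-norm of x, so the partial cost sums are bounded above and
   x(mu, nu) < +oo for every nu.  Part (iii) of the SSP assumption then forces
   every prolonging pair (mu, nu) to have cost -oo somewhere, while (mu, nubar)
   cannot be prolonging at all because its cost is finite by part (ii).  The
   statement for nu is symmetric, and mubar, nubar satisfy the finiteness
   conditions by assumption. *)

Lemma mx_entry_norm_le (R : realDomainType) (m k : nat) (x : 'M[R]_(m, k)) i j :
  `|x i j| <= `|x|.
Proof.
have -> : `|x| = mx_norm x by [].
rewrite mx_normrE; apply/bigmax_geP; right.
by exists (i, j).
Qed.

Section NonnegativeMatrix.
Variables (R : realDomainType) (n : nat) (P : 'M[R]_n).
Hypothesis P_ge0 : forall i j, 0 <= P i j.

Lemma nonneg_mulmx_le (y z : 'cV[R]_n) : (forall j, y j 0 <= z j 0) ->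
  forall i, (P *m y) i 0 <= (P *m z) i 0.
Proof.
move=> yz i; rewrite !mxE; apply: ler_sum => j _.
exact: ler_wpM2l.
Qed.

Lemma nonneg_expmx_mul_le t (y z : 'cV[R]_n) : (forall j, y j 0 <= z j 0) ->
  forall i, (P ^+ t *m y) i 0 <= (P ^+ t *m z) i 0.
Proof.
elim: t => [|t IH] yz i; first by rewrite expr0 !mul1mx.
by rewrite exprS -mulmxE -!mulmxA; apply: nonneg_mulmx_le => j; apply: IH.
Qed.

Lemma superharmonic_expmx_sum (c x : 'cV[R]_n) :
  (forall i, (c + P *m x) i 0 <= x i 0) ->
  forall t i, \sum_(k < t) (P ^+ k *m c) i 0 + (P ^+ t *m x) i 0 <= x i 0.
Proof.
move=> superx; elim=> [|t IH] i; first by rewrite big_ord0 expr0 mul1mx add0r.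
rewrite big_ord_recr /= -addrA; apply: le_trans (IH i); rewrite lerD2l.
have := nonneg_expmx_mul_le t superx i.
by rewrite mulmxDr mulmxA mulmxE -exprSr [X in X <= _]mxE.
Qed.

End NonnegativeMatrix.

Section SubstochasticMatrix.
Variables (R : realDomainType) (n : nat) (P : 'M[R]_n).
Hypothesis P_ge0 : forall i j, 0 <= P i j.
Hypothesis P_row_le1 : forall i, \sum_j P i j <= 1.

Lemma substoch_mulmx_bound (y : 'cV[R]_n) M : (forall j, `|y j 0| <= M) ->
  forall i, `|(P *m y) i 0| <= M.
Proof.
move=> yM i; have M_ge0 : 0 <= M by apply: le_trans (yM i); rewrite normr_ge0.
rewrite mxE; apply: le_trans (ler_norm_sum _ _ _) _.
apply: (@le_trans _ _ (\sum_j P i j * M)).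
  by apply: ler_sum => j _; rewrite normrM ger0_norm //; apply: ler_wpM2l.
by rewrite -mulr_suml -[leRHS]mul1r; apply: ler_wpM2r.
Qed.

Lemma substoch_expmx_entry_le t (x : 'cV[R]_n) i : `|(P ^+ t *m x) i 0| <= `|x|.
Proof.
elim: t i => [|t IH] i; first by rewrite expr0 mul1mx mx_entry_norm_le.
by rewrite exprS -mulmxE -mulmxA; apply: substoch_mulmx_bound.
Qed.

Lemma superharmonic_partial_sum_le (c x : 'cV[R]_n) :
  (forall i, (c + P *m x) i 0 <= x i 0) ->
  forall t i, \sum_(k < t) (P ^+ k *m c) i 0 <= x i 0 + `|x|.
Proof.
move=> superx t i; have := superharmonic_expmx_sum P_ge0 superx t i.
rewrite -lerBrDr => /le_trans; apply; rewrite lerD2l lerNl.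
by move: (substoch_expmx_entry_le t x i); rewrite ler_norml => /andP[].
Qed.

Lemma subharmonic_partial_sum_ge (c x : 'cV[R]_n) :
  (forall i, x i 0 <= (c + P *m x) i 0) ->
  forall t i, x i 0 - `|x| <= \sum_(k < t) (P ^+ k *m c) i 0.
Proof.
move=> subx t i.
have superNx i' : (- c + P *m - x) i' 0 <= (- x) i' 0.
  by rewrite mulmxN -opprD mxE [leRHS]mxE lerN2.
have := superharmonic_partial_sum_le superNx t i.
rewrite normrN !mxE (eq_bigr (fun k => - (P ^+ (val k) *m c) i 0)); last first.
  by move=> k _; rewrite mulmxN mxE.
by rewrite sumrN lerNl opprD opprK.
Qed.

End SubstochasticMatrix.

Section LiminfBounds.
Variables (R : realType) (u : (\bar R)^nat) (a : \bar R).

Lemma limn_einf_le_ub : (forall t, u t <= a)%E -> (limn_einf u <= a)%E.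
Proof.
move=> ua; rewrite limn_einf_lim; apply: lime_le; first exact: is_cvg_einfs.
apply: nearW => m; apply: le_trans (ua m).
by apply: ereal_inf_lbound; exists m => /=.
Qed.

Lemma limn_einf_ge_lb : (forall t, a <= u t)%E -> (a <= limn_einf u)%E.
Proof.
move=> au; rewrite limn_einf_lim; apply: lime_ge; first exact: is_cvg_einfs.
by apply: nearW => m; apply: le_ereal_inf_tmp => _ [k _ <-].
Qed.

End LiminfBounds.

Section StationaryPair.
Variables (R : realType) (U V : Type) (n : nat) (G : game R U V n).
Hypothesis p_ge0 : forall i j u v, Ubar G i u -> Vbar G i v -> 0 <= prob G i j u v.
Hypothesis p_sum1 : forall i u v, Ubar G i u -> Vbar G i v ->
  prob G i None u v + \sum_(j < n) prob G i (Some j) u v = 1.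
Variables (mu : 'I_n -> U) (nu : 'I_n -> V).
Hypotheses (mu_SD : Pi1SD G mu) (nu_SD : Pi2SD G nu).

Lemma Pmx_ge0 i j : 0 <= Pmx G mu nu i j.
Proof. by rewrite mxE; apply: p_ge0. Qed.

Lemma Pmx_row_sum_le1 i : \sum_j Pmx G mu nu i j <= 1.
Proof.
under eq_bigr do rewrite mxE.
rewrite -(p_sum1 (mu_SD i) (nu_SD i)) lerDr.
exact: p_ge0.
Qed.

Lemma xcost_lt_pinfty (x : 'cV[R]_n) :
  (forall i, Tmunu G mu nu x i 0 <= x i 0) -> forall i, (xcost G mu nu i < +oo)%E.
Proof.
move=> superx i; apply: le_lt_trans (ltry (x i 0 + `|x|)).
apply: limn_einf_le_ub => t; rewrite lee_fin.
exact: (superharmonic_partial_sum_le Pmx_ge0 Pmx_row_sum_le1 superx t.+1 i).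
Qed.

Lemma xcost_gt_ninfty (x : 'cV[R]_n) :
  (forall i, x i 0 <= Tmunu G mu nu x i 0) -> forall i, (-oo < xcost G mu nu i)%E.
Proof.
move=> subx i; apply: lt_le_trans (ltNyr (x i 0 - `|x|)) _.
apply: limn_einf_ge_lb => t; rewrite lee_fin.
exact: (subharmonic_partial_sum_ge Pmx_ge0 Pmx_row_sum_le1 subx t.+1 i).
Qed.

End StationaryPair.

Lemma Tmunu_le_Tmu (R : realType) (U V : Type) (n : nat) (G : game R U V n)
  mu nu (x : 'cV[R]_n) i : Pi2SD G nu ->
  ((Tmunu G mu nu x i 0)%:E <= Tmu G mu x i)%E.
Proof. by move=> nu_SD; apply: ereal_sup_ubound; exists nu. Qed.

Lemma Ttnu_le_Tmunu (R : realType) (U V : Type) (n : nat) (G : game R U V n)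
  mu nu (x : 'cV[R]_n) i : Pi1SD G mu ->
  (Ttnu G nu x i <= (Tmunu G mu nu x i 0)%:E)%E.
Proof. by move=> mu_SD; apply: ereal_inf_lbound; exists mu. Qed.

Section EssentiallyProper.
Variables (R : realType) (U V : Type) (n : nat) (G : game R U V n).
Hypothesis SSP : SSP_assumption G.

Lemma ess_proper1_of_xcost_lt_pinfty mu : Pi1SD G mu ->
  (forall nu, Pi2SD G nu -> forall i, (xcost G mu nu i < +oo)%E) ->
  ess_proper1 G mu.
Proof.
case: SSP => _ [nubar [nubar_SD nubar_fin]] prolonging_inf mu_SD mu_fin; split.
  exists nubar; split => // prol.
  have [i [e|e]] := prolonging_inf _ _ mu_SD nubar_SD prol.
    by have := mu_fin _ nubar_SD i; rewrite e ltxx.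
  by have := nubar_fin _ mu_SD i; rewrite e ltxx.
move=> nu nu_SD prol; have [i [e|e]] := prolonging_inf _ _ mu_SD nu_SD prol.
  by have := mu_fin _ nu_SD i; rewrite e ltxx.
by exists i.
Qed.

Lemma ess_proper2_of_xcost_gt_ninfty nu : Pi2SD G nu ->
  (forall mu, Pi1SD G mu -> forall i, (-oo < xcost G mu nu i)%E) ->
  ess_proper2 G nu.
Proof.
case: SSP => [[mubar [mubar_SD mubar_fin]] _ prolonging_inf] nu_SD nu_fin; split.
  exists mubar; split => // prol.
  have [i [e|e]] := prolonging_inf _ _ mubar_SD nu_SD prol.
    by have := mubar_fin _ nu_SD i; rewrite e ltxx.
  by have := nu_fin _ mubar_SD i; rewrite e ltxx.
move=> mu mu_SD prol; have [i [e|e]] := prolonging_inf _ _ mu_SD nu_SD prol.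
  by exists i.
by have := nu_fin _ mu_SD i; rewrite e ltxx.
Qed.

End EssentiallyProper.

Theorem lemma2p3 (R : realType) (U V : completePseudoMetricType R) (n : nat)
  (G : game R U V n)
  (* action spaces: complete separable metric spaces, compact action sets *)
  (hU : hausdorff_space U) (hV : hausdorff_space V)
  (sU : separable_space U) (sV : separable_space V)
  (cU : forall i, compact (Ubar G i)) (cV : forall i, compact (Vbar G i))
  (* transition probabilities *)
  (p_ge0 : forall i j u v, Ubar G i u -> Vbar G i v -> 0 <= prob G i j u v)
  (p_sum1 : forall i u v, Ubar G i u -> Vbar G i v ->
     prob G i None u v + \sum_(j < n) prob G i (Some j) u v = 1)
  (p_cont : forall i j,
     {within Ubar G i `*` Vbar G i, continuous (fun uv : U * V => prob G i j uv.1 uv.2)})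
  (* semicontinuity of costs *)
  (c_lsc : forall i v, Vbar G i v -> lsc_on (Ubar G i) (fun u => cost G i u v))
  (c_usc : forall i u, Ubar G i u -> usc_on (Vbar G i) (fun v => cost G i u v))
  (hSSP : SSP_assumption G) :
  [/\ forall mu, Pi1SD G mu ->
        (exists x : 'cV[R]_n, forall i, (Tmu G mu x i <= (x i 0)%:E)%E) ->
        ess_proper1 G mu,
      forall nu, Pi2SD G nu ->
        (exists x : 'cV[R]_n, forall i, ((x i 0)%:E <= Ttnu G nu x i)%E) ->
        ess_proper2 G nu,
      forall mubar, Pi1SD G mubar ->
        (forall nu, Pi2SD G nu -> forall i, (xcost G mubar nu i < +oo)%E) ->
        ess_proper1 G mubar &
      forall nubar, Pi2SD G nubar ->
        (forall mu, Pi1SD G mu -> forall i, (-oo < xcost G mu nubar i)%E) ->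
        ess_proper2 G nubar].
Proof.
split; [| | exact: ess_proper1_of_xcost_lt_pinfty | exact: ess_proper2_of_xcost_gt_ninfty].
- move=> mu mu_SD [x superx]; apply: ess_proper1_of_xcost_lt_pinfty => // nu nu_SD.
  apply: (xcost_lt_pinfty p_ge0 p_sum1 mu_SD nu_SD) => i.
  rewrite -lee_fin; exact: le_trans (Tmunu_le_Tmu mu x i nu_SD) (superx i).
- move=> nu nu_SD [x subx]; apply: ess_proper2_of_xcost_gt_ninfty => // mu mu_SD.
  apply: (xcost_gt_ninfty p_ge0 p_sum1 mu_SD nu_SD) => i.
  rewrite -lee_fin; exact: le_trans (subx i) (Ttnu_le_Tmunu nu x i mu_SD).
Qed.
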